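(* Let $T=(\mathcal V,E,r)$ be a tree whose vertices are distinct points of a metric space $(X,d)$, and give each edge $e=(v,v')$ length $L_e=d(v,v')$. Sort the edges as $e_1,\dots,e_{|\mathcal V|-1}$ in nondecreasing order of length, and assign ranks: $e_1$ has rank 1, and for $t\ge2$, $e_t$ has the rank of $e_{t-1}$ if $L_{e_t}\le2\sum_{s=1}^{t-1}L_{e_s}$, and the rank of $e_{t-1}$ plus 1 otherwise. Then for any two edges $e,e'$ of the same rank, $L_e/L_{e'}\le3^{|\mathcal V|-1}$. *)

From mathcomp Require Import all_boot all_order all_algebra.
Set Implicit Arguments. Unset Strict Implicit. Unset Printing Implicit Defensive.
Import Order.TTheory GRing.Theory Num.Theory.
Local Open Scope ring_scope.

Definition is_metric (R : realFieldType) (X : Type) (d : X -> X -> R) : Prop :=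
  [/\ (forall x y, 0 <= d x y),
      (forall x y, d x y = 0 <-> x = y),
      (forall x y, d x y = d y x) &
      (forall x y z, d x z <= d x y + d y z)].

Definition edge_rel (V : finType) (E : seq (V * V)) : rel V :=
  fun x y => ((x, y) \in E) || ((y, x) \in E).

Definition is_rooted_tree (V : finType) (E : seq (V * V)) (r : V) : Prop :=
  [/\ all (fun e => e.1 != e.2) E,
      size E = #|V|.-1 &
      (forall x y : V, connect (edge_rel E) x y)].

Definition edge_len (R : realFieldType) (X : Type) (d : X -> X -> R)
  (V : finType) (p : V -> X) (e : V * V) : R := d (p e.1) (p e.2).

(* rank of the t-th (0-indexed) element of the sorted length list ls:
   rank 0 = 1 ; rank (t+1) = rank t if ls_(t+1) <= 2 * sum_(s <= t) ls_s,
   and rank t + 1 otherwise. *)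
Fixpoint rank (R : realFieldType) (ls : seq R) (t : nat) : nat :=
  match t with
  | 0 => 1%N
  | t'.+1 => if ls`_t <= 2 * \sum_(0 <= s < t) ls`_s then rank ls t'
             else (rank ls t').+1
  end.

From mathcomp Require Import all_boot all_order all_algebra.
From mathcomp Require Import lra.
Import Order.TTheory GRing.Theory Num.Theory.
Local Open Scope ring_scope.

(** Within a rank class every new length is at most twice the sum of all
    previous ones, so each step at most triples the running sum of lengths.
    If the class starts at position [j], the running sum after position [i]
    is at most [3^(i-j)] times the running sum after [j], which by sortedness
    is at most [(j+1)] times the length at [j]; since [j+1 <= 3^j], the length
    at [i] is at most [3^i <= 3^(|V|-1)] times the length at [j]. *)

Section RankGrowth.
Variables (R : realFieldType) (ls : seq R).

Definition psum k := \sum_(0 <= s < k) ls`_s.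

Lemma rank_homo : {homo rank ls : m n / (m <= n)%N}.
Proof. by apply: homo_leq => [//|t m n|t]; [apply: leq_trans | rewrite /=; case: ifP]. Qed.

Lemma rank_stable_le t :
  rank ls t.+1 = rank ls t -> ls`_t.+1 <= 2 * psum t.+1.
Proof. by rewrite /=; case: ifP => // _ /esym/n_Sn. Qed.

Lemma psum_rank_growth j k :
  rank ls (j + k) = rank ls j -> psum (j + k).+1 <= 3 ^+ k * psum j.+1.
Proof.
elim: k => [|k IH] hrank; first by rewrite addn0 mul1r.
have rank_jk : rank ls (j + k) = rank ls j.
  apply/eqP; rewrite eqn_leq -[X in (_ <= X)%N]hrank.
  by rewrite !rank_homo ?leq_addr ?addnS.
have hstep : ls`_(j + k).+1 <= 2 * psum (j + k).+1.
  by apply: rank_stable_le; rewrite -addnS hrank rank_jk.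
have psum_triple : psum (j + k).+2 <= 3 * psum (j + k).+1.
  by rewrite /psum big_nat_recr //= -/(psum _); lra.
rewrite addnS (le_trans psum_triple) // exprS -mulrA ler_pM2l //.
exact: IH.
Qed.

Lemma psum_sorted_le j :
  sorted <=%R ls -> (j < size ls)%N -> psum j.+1 <= j.+1%:R * ls`_j.
Proof.
move=> ls_sorted lt_j_ls; rewrite mulr_natl -[X in _ *+ X]subn0 -sumr_const_nat.
rewrite /psum big_nat_cond [X in _ <= X]big_nat_cond.
apply: ler_sum => k /andP[/andP[_ lt_kj] _].
apply: (sorted_leq_nth le_trans lexx) => //; rewrite inE //.
exact: leq_trans lt_kj lt_j_ls.
Qed.

Lemma nth_le_psum i : (forall k, 0 <= ls`_k) -> ls`_i <= psum i.+1.
Proof. by move=> ls_ge0; rewrite /psum big_nat_recr //= lerDr sumr_ge0. Qed.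

Lemma rank_class_le i j :
  sorted <=%R ls -> (forall k, 0 <= ls`_k) ->
  (i < size ls)%N -> (j < size ls)%N -> rank ls i = rank ls j ->
  ls`_i <= 3 ^+ i * ls`_j.
Proof.
move=> ls_sorted ls_ge0 lt_i_ls lt_j_ls hrank.
case: (leqP i j) => [le_ij | lt_ji].
  have le_ls_ij : ls`_i <= ls`_j.
    by apply: (sorted_leq_nth le_trans lexx) => //; rewrite inE.
  by rewrite (le_trans le_ls_ij) // ler_peMl // exprn_ege1 //; lra.
move: hrank; rewrite -(subnKC (ltnW lt_ji)) => hrank.
apply: (le_trans (nth_le_psum _ ls_ge0)); apply: (le_trans (psum_rank_growth _ _ hrank)).
rewrite exprD [3 ^+ j * _]mulrC -mulrA ler_pM2l ?exprn_gt0 //.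
apply: (le_trans (psum_sorted_le _ ls_sorted lt_j_ls)).
by rewrite ler_wpM2r // -natrX ler_nat ltn_expl.
Qed.

End RankGrowth.

Theorem claim3 (R : realFieldType) (X : Type) (d : X -> X -> R)
  (V : finType) (p : V -> X) (E : seq (V * V)) (r : V)
  (hd : is_metric d) (hp : injective p) (hT : is_rooted_tree E r)
  (s : seq (V * V))
  (hperm : perm_eq s E)
  (hsort : sorted (fun a b => a <= b) (map (edge_len d p) s)) :
  forall i j : nat, (i < size s)%N -> (j < size s)%N ->
    rank (map (edge_len d p) s) i = rank (map (edge_len d p) s) j ->
    edge_len d p (nth (r, r) s i) / edge_len d p (nth (r, r) s j)
      <= 3 ^+ (#|V|.-1).
Proof.
move=> i j lt_i_s lt_j_s hrank.
have size_s : size s = #|V|.-1 by case: hT => _ <- _; apply: perm_size.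
rewrite -size_s -!(nth_map (r, r) 0) //.
set ls := map _ s; have size_ls : size ls = size s by rewrite size_map.
have ls_ge0 k : 0 <= ls`_k.
  have [lt_k_s | le_s_k] := ltnP k (size s); last by rewrite nth_default ?size_ls.
  by rewrite (nth_map (r, r)) //; case: hd => d_ge0 _ _ _; apply: d_ge0.
have le_ls_ij : ls`_i <= 3 ^+ i * ls`_j by apply: rank_class_le; rewrite ?size_ls.
have [-> | nz_ls_j] := eqVneq ls`_j 0; first by rewrite invr0 mulr0 exprn_ge0.
rewrite ler_pdivrMr ?lt_def ?nz_ls_j ?ls_ge0 // (le_trans le_ls_ij) // ler_wpM2r //.
by rewrite ler_eXn2l ?(ltnW lt_i_s) //; lra.
Qed.
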